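(* In any execution of the algorithm $\mathcal{A}$ described in the context, for any two processes $p_i$ and $p_j$, if $p_i$ writes a set $S_i$ to $Set[i]$ and $p_j$ writes a set $S_j$ to $Set[j]$, then $S_i\subseteq S_j$ or $S_j\subseteq S_i$.
   Context: Algorithm $\mathcal{A}$ (a safe agreement algorithm for processes $p_0,\dots,p_{m-1}$, each invoking $propose$ at most once). Shared single-writer registers, for $0\le i<m$, written only by $p_i$: $Val[i]$ (initially $\bot$), $Id[i]$ (initially $\bot$), $Set[i]$ (initially $\emptyset$). $propose(v)$ at $p_i$: write $Val[i]\gets v$; write $Id[i]\gets i$; repeat { read $Id[0],\dots,Id[m-1]$ in order into $collect1$; read $Id[0],\dots,Id[m-1]$ in order into $collect2$ } until $collect1=collect2$ componentwise; then write $Set[i]\gets\{j: collect1[j]\neq\bot\}$. $resolve()$ at $p_i$: read $Set[0],\dots,Set[m-1]$, let $C$ be the smallest non-empty set read; if for every $j\in C$ the value read from $Set[j]$ is non-empty and contains $C$, return $Val[\min C]$, else return $\bot$. Reads and writes of registers are atomic. *)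

From mathcomp Require Import all_boot all_order.
Set Implicit Arguments. Unset Strict Implicit. Unset Printing Implicit Defensive.

Section Model.
Variables (T : Type) (m : nat).

(* Local control state of a process running propose. A collect is the
   sequence of values read so far from Id[0], Id[1], ... (None = bottom). *)
Inductive pstate :=
| Idle
| PWVal of T                                         (* about to write Val[i] <- v *)
| PWId                                               (* about to write Id[i] <- i *)
| PColl1 of seq (option 'I_m)                        (* building collect1 *)
| PColl2 of seq (option 'I_m) & seq (option 'I_m)    (* collect1 done, building collect2 *)
| PWSet of seq (option 'I_m)                         (* about to write Set[i] *)
| PDone.

Record config := Config {
  local : 'I_m -> pstate;
  RVal : 'I_m -> option T;          (* Val[i], None = bottom *)
  RId  : 'I_m -> option 'I_m;       (* Id[i],  None = bottom *)
  RSet : 'I_m -> {set 'I_m}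
}.

Definition init : config :=
  Config (fun _ => Idle) (fun _ => None) (fun _ => None) (fun _ => set0).

Definition upd (A : Type) (f : 'I_m -> A) (i : 'I_m) (x : A) : 'I_m -> A :=
  fun j => if j == i then x else f j.

(* Events (one atomic shared-memory access, or the invocation of propose). *)
Inductive event :=
| EInvoke of T
| EWriteVal of T
| EWriteId
| EReadId of 'I_m & option 'I_m
| EWriteSet of {set 'I_m}.

Definition next1 (c : seq (option 'I_m)) : pstate :=
  if size c == m then PColl2 c [::] else PColl1 c.

Definition next2 (c1 c2 : seq (option 'I_m)) : pstate :=
  if size c2 == m then (if c1 == c2 then PWSet c1 else PColl1 [::])
  else PColl2 c1 c2.

Definition set_of_collect (c : seq (option 'I_m)) : {set 'I_m} :=
  [set j : 'I_m | nth None c j != None].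

Inductive step : config -> 'I_m -> event -> config -> Prop :=
| st_invoke C i v :
    local C i = Idle ->
    step C i (EInvoke v)
      (Config (upd (local C) i (PWVal v)) (RVal C) (RId C) (RSet C))
| st_wval C i v :
    local C i = PWVal v ->
    step C i (EWriteVal v)
      (Config (upd (local C) i PWId) (upd (RVal C) i (Some v)) (RId C) (RSet C))
| st_wid C i :
    local C i = PWId ->
    step C i EWriteId
      (Config (upd (local C) i (PColl1 [::])) (RVal C) (upd (RId C) i (Some i)) (RSet C))
| st_read1 C i c (k : 'I_m) :
    local C i = PColl1 c -> nat_of_ord k = size c ->
    step C i (EReadId k (RId C k))
      (Config (upd (local C) i (next1 (rcons c (RId C k)))) (RVal C) (RId C) (RSet C))
| st_read2 C i c1 c2 (k : 'I_m) :
    local C i = PColl2 c1 c2 -> nat_of_ord k = size c2 ->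
    step C i (EReadId k (RId C k))
      (Config (upd (local C) i (next2 c1 (rcons c2 (RId C k)))) (RVal C) (RId C) (RSet C))
| st_wset C i c :
    local C i = PWSet c ->
    step C i (EWriteSet (set_of_collect c))
      (Config (upd (local C) i PDone) (RVal C) (RId C)
              (upd (RSet C) i (set_of_collect c))).

Inductive exec : config -> seq ('I_m * event) -> Prop :=
| exec_nil : exec init [::]
| exec_snoc C tr i e C' :
    exec C tr -> step C i e C' -> exec C' (rcons tr (i, e)).

End Model.

(* Id registers go from bottom to a process index once and never change again,
   so the set W of written ids only grows.  A successful double collect returns
   W as it was between its two collects: the first collect only sees ids in W,
   and any id written before the second collect started would have been seen by
   it, making the collects differ.  Written sets are therefore values of a
   growing set, hence comparable.
   Instead of time stamps the proof uses an invariant on configurations.  The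
   view of a process is the set of ids it has collected in its (current) first
   collect, or the set it wrote.  Every view lies in W, and for any two
   processes one of them covers the view of the other: each id of that view is
   either in its first collect, or not read yet, or read as non-bottom in its
   second collect.  A process that (re)starts a first collect covers
   everything, and a process reading in its second collect keeps covering any
   subset of W, because it reads those ids as non-bottom. *)
From mathcomp Require Import all_boot all_order.
Set Implicit Arguments. Unset Strict Implicit. Unset Printing Implicit Defensive.

Section SafeAgreement.
Variables (T : Type) (m : nat).
Implicit Types (C : config T m) (p x y : 'I_m) (K R : {set 'I_m}).
Implicit Types (c : seq (option 'I_m)).

Lemma upd_same A (f : 'I_m -> A) p a : upd f p a p = a.
Proof. by rewrite /upd eqxx. Qed.

Lemma upd_other A (f : 'I_m -> A) p a x : x != p -> upd f p a x = f x.
Proof. by rewrite /upd => /negbTE ->. Qed.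

Lemma set_of_collect_nil : set_of_collect [::] = set0 :> {set 'I_m}.
Proof. by apply/setP=> k; rewrite !inE nth_nil. Qed.

Definition written C : {set 'I_m} := [set k | RId C k != None].

Lemma set_of_collect_read C c (k : 'I_m) : k = size c :> nat ->
  set_of_collect (rcons c (RId C k)) \subset set_of_collect c :|: written C.
Proof.
move=> hk; apply/subsetP=> j; rewrite !inE nth_rcons.
case: ltnP => [_ -> // | _]; case: (eqVneq (val j) (size c)) => [ej | _] //.
have -> : j = k by apply: val_inj; rewrite /= ej hk.
by move=> ->; rewrite orbT.
Qed.

Definition view_of (s : pstate T m) R : {set 'I_m} :=
  match s with
  | PColl1 c | PColl2 c _ | PWSet c => set_of_collect c
  | PDone => R
  | _ => set0
  end.

(* If the current double collect of a process in state [s] succeeds (or has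
   succeeded), the set it writes contains [K]; no obligation before its second
   collect starts. *)
Definition covers_of (s : pstate T m) R K : Prop :=
  match s with
  | PColl2 c1 c2 => {in K, forall k : 'I_m,
      [|| nth None c1 k != None, size c2 <= k | nth None c2 k != None]}
  | PWSet c => K \subset set_of_collect c
  | PDone => K \subset R
  | _ => True
  end.

Definition view C x := view_of (local C x) (RSet C x).
Definition covers C x K := covers_of (local C x) (RSet C x) K.

Lemma covers_read2 C c1 c2 (k : 'I_m) R R' K : K \subset written C ->
  k = size c2 :> nat -> covers_of (PColl2 T c1 c2) R K ->
  covers_of (PColl2 T c1 (rcons c2 (RId C k))) R' K.
Proof.
move=> /subsetP hKW hk hcov j jK; rewrite size_rcons nth_rcons.
case/or3P: (hcov j jK) => [-> // | | hj]; last first.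
  case: (ltnP j (size c2)) => [_ | ge]; first by rewrite hj !orbT.
  by move: hj; rewrite nth_default.
rewrite leq_eqVlt => /orP[/eqP ej | -> //]; rewrite ?orbT //.
have {ej} ejk : j = k by apply: val_inj; rewrite /= -ej hk.
subst j; move: (hKW k jK); rewrite inE hk ltnn eqxx => ->.
by rewrite !orbT.
Qed.

Lemma covers_collect_complete c R K : size c = m ->
  covers_of (PColl2 T c c) R K -> K \subset set_of_collect c.
Proof.
move=> hc hcov; apply/subsetP=> j jK; rewrite inE.
by case/or3P: (hcov j jK) => //; rewrite hc leqNgt ltn_ord.
Qed.

Section Step.
Variables (C C' : config T m) (p : 'I_m) (e : event T m).
Hypothesis hstep : step C p e C'.

Lemma step_other x : x != p ->
  local C' x = local C x /\ RSet C' x = RSet C x.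
Proof. by case: hstep => * /=; rewrite ?upd_other. Qed.

Lemma view_covers_other x : x != p ->
  view C' x = view C x /\ covers C' x = covers C x.
Proof. by move=> /step_other[lx rx]; rewrite /view /covers lx rx. Qed.

Lemma step_not_done : local C p <> PDone T m.
Proof. by case: hstep => * ; congruence. Qed.

Lemma written_step : written C \subset written C'.
Proof.
case: hstep => /= D q *; apply/subsetP=> x; rewrite !inE //=.
by case: (eqVneq x q) => [-> | hx]; rewrite ?upd_same ?upd_other.
Qed.

Lemma view_step : view C' p \subset view C p :|: written C.
Proof.
rewrite /view; case: hstep => /= [D q v|D q v|D q|D q c k|D q c1 c2 k|D q c] lq *;
  rewrite upd_same lq /= ?set_of_collect_nil ?sub0set //.
- by rewrite /next1; case: ifP => _; apply: set_of_collect_read.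
- rewrite /next2; case: ifP => _; last exact: subsetUl.
  by case: ifP => _; rewrite /= ?set_of_collect_nil ?sub0set ?subsetUl.
- by rewrite upd_same subsetUl.
Qed.

Lemma covers_step :
  (forall K, covers C' p K) \/
  view C' p = view C p /\
  (forall K, K \subset written C -> covers C p K -> covers C' p K).
Proof.
rewrite /view /covers;
case: hstep => /= [D q v|D q v|D q|D q c k|D q c1 c2 k|D q c] lq *;
  rewrite ?upd_same lq /=; try by left.
- by left=> K; rewrite /next1; case: ifP => //= _ j _; rewrite orbT.
- rewrite /next2; case: ifP => [/eqP hsz|_]; last first.
    by right; split=> // K hKW; apply: covers_read2.
  case: ifP => [/eqP hc|_]; last by left.
  right; split=> // K hKW hcov; rewrite hc.
  apply: (@covers_collect_complete _ (RSet D q) K hsz).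
  by rewrite -{1}hc; apply: covers_read2 hKW _ hcov.
- by right; split=> // K _.
Qed.

Lemma step_write_set S : e = EWriteSet T S ->
  local C' p = PDone T m /\ RSet C' p = S.
Proof. by case: hstep => //= ? ? c _ [<-]; rewrite !upd_same. Qed.

End Step.

Definition views_written C := forall x, view C x \subset written C.

Definition views_covered C :=
  forall x y, covers C y (view C x) \/ covers C x (view C y).

Definition set_writes_final C (tr : seq ('I_m * event T m)) :=
  forall k i S, k < size tr -> nth (i, EWriteSet T S) tr k = (i, EWriteSet T S) ->
  local C i = PDone T m /\ RSet C i = S.

Lemma views_written_step C C' p e :
  step C p e C' -> views_written C -> views_written C'.
Proof.
move=> hs hW x; apply: subset_trans (written_step hs).
have [-> | /(view_covers_other hs)[-> _] //] := eqVneq x p.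
by apply: subset_trans (view_step hs) _; rewrite subUset hW subxx.
Qed.

Lemma views_covered_step C C' p e : step C p e C' ->
  views_written C -> views_covered C -> views_covered C'.
Proof.
move=> hs hW hV.
suff cover_p x : covers C' p (view C' x) \/ covers C' x (view C' p).
  move=> x y; have [-> | yp] := eqVneq y p; first exact: cover_p.
  have [-> | xp] := eqVneq x p; first by case: (cover_p y); [right | left].
  have [[-> ->] [-> ->]] := (view_covers_other hs xp, view_covers_other hs yp).
  exact: hV.
case: (covers_step hs) => [hnew | [hview hkeep]]; first by left.
have [-> | xp] := eqVneq x p.
  by left; rewrite hview; apply: hkeep (hW p) _; case: (hV p p).
have [-> ->] := view_covers_other hs xp; rewrite hview.
by case: (hV x p) => [/(hkeep _ (hW x)) | ]; [left | right].
Qed.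

Lemma set_writes_final_step C C' tr p e : step C p e C' ->
  set_writes_final C tr -> set_writes_final C' (rcons tr (p, e)).
Proof.
move=> hs hF k i S; rewrite size_rcons ltnS nth_rcons leq_eqVlt.
case: ltnP => [lt _ /(hF _ _ _ lt) [li ri] | ge]; last first.
  by rewrite orbF => /eqP -> ; rewrite eqxx => -[<- /(step_write_set hs)].
have ip : i != p by apply/eqP=> eip; apply: (step_not_done hs); rewrite -eip.
by have [-> ->] := step_other hs ip.
Qed.

Lemma exec_invariants C tr : exec C tr ->
  [/\ views_written C, views_covered C & set_writes_final C tr].
Proof.
elim=> [|{}C {}tr p e C' _ [hW hV hF] hs].
  by split=> [x | x y | k i S //]; [rewrite /view sub0set | left].
split; [exact: views_written_step hs hW | exact: views_covered_step hs hW hV |].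
exact: set_writes_final_step hs hF.
Qed.

End SafeAgreement.

Theorem lemma6 (T : Type) (m : nat) (C : config T m) (tr : seq ('I_m * event T m))
  (i j : 'I_m) (Si Sj : {set 'I_m}) (ki kj : nat) :
  exec C tr ->
  ki < size tr -> nth (i, EWriteSet T Si) tr ki = (i, EWriteSet T Si) ->
  kj < size tr -> nth (j, EWriteSet T Sj) tr kj = (j, EWriteSet T Sj) ->
  (Si \subset Sj) \/ (Sj \subset Si).
Proof.
move=> /exec_invariants[_ hV hF] hi ei hj ej.
have [[li ri] [lj rj]] := (hF _ _ _ hi ei, hF _ _ _ hj ej).
by case: (hV i j); rewrite /covers /view li lj ri rj /=; [left | right].
Qed.
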